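(* Let $\chi$ be a kernel satisfying $(\chi_1)$ and $(\chi_2)$ with $\eta>0$. Let $f:\mathbb{R}_+\to\mathbb{R}_+$ be bounded. Then $\lim_{w\to\infty}MG^{\chi}_w(f,x)=f(x)$ at every point $x\in\mathbb{R}_+$ at which $f$ is log-continuous. Moreover, if $f\in\mathcal{UB}^{\bar\omega}_+(\mathbb{R}_+)$, then $\lim_{w\to\infty}\|MG^{\chi}_w f-f\|_{\bar\omega}=0$.
   Context: $\mathbb{R}_+$ denotes the positive reals; $\bigvee_{k\in\Lambda}T_k=\sup\{T_k:k\in\Lambda\}$. A kernel is a bounded measurable $\chi:\mathbb{R}_+\to\mathbb{R}$. Moments: $m_{\nu}(\chi)=\sup_{u>0}\bigvee_{k\in\mathbb{Z}}|\chi(e^{-k}u)||k-\log u|^{\nu}$. Condition $(\chi_1)$: $m_2(\chi)<\infty$. Condition $(\chi_2)$: $\eta:=\inf_{x\in[1,e]}\chi(x)$ exists. Weight $\bar\omega(x)=\frac1{1+\log^2x}$, $\|f\|_{\bar\omega}=\sup_{x>0}\bar\omega(x)|f(x)|$. A function $g:\mathbb{R}_+\to\mathbb{R}$ is log-uniformly continuous if for every $\epsilon>0$ there is $\delta>0$ with $|g(x)-g(y)|<\epsilon$ whenever $|\log x-\log y|\le\delta$; $f$ is log-continuous at $x$ if for every $\epsilon>0$ there is $\delta>0$ with $|f(y)-f(x)|<\epsilon$ whenever $|\log y-\log x|\le \delta$. $\mathcal{UB}^{\bar\omega}_+(\mathbb{R}_+)$ is the set of nonnegative $f:\mathbb{R}_+\to\mathbb{R}$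 such that $\bar\omega f$ is bounded and log-uniformly continuous. Operator: $MG^{\chi}_w(f,x)=\frac{\bigvee_{k\in\mathbb{Z}}\chi(e^{-k}x^{w})f(e^{k/w})}{\bigvee_{k\in\mathbb{Z}}\chi(e^{-k}x^{w})}$. *)

From HB Require Import structures.
From mathcomp Require Import all_boot all_order all_algebra.
From mathcomp Require Import all_classical all_reals all_analysis.
Set Implicit Arguments. Unset Strict Implicit. Unset Printing Implicit Defensive.
Import Order.TTheory GRing.Theory Num.Theory.
Import numFieldNormedType.Exports.
Local Open Scope classical_set_scope.
Local Open Scope ring_scope.

Section Defs.
Variable R : realType.

Definition Rpos : set R := [set x | 0 < x].

(* kernel: bounded measurable chi : R_+ -> R (values off R_+ are irrelevant) *)
Definition is_kernel (chi : R -> R) : Prop :=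
  measurable_fun Rpos chi /\ exists M : R, forall x, 0 < x -> `|chi x| <= M.

Definition moment (nu : R) (chi : R -> R) : \bar R :=
  ereal_sup [set ((`|chi (expR (- k%:~R) * u)| * (`|k%:~R - ln u| `^ nu))%:E)
            | u in Rpos & k in [set: int]].

Definition chi1 (chi : R -> R) : Prop := (moment 2 chi < +oo)%E.

Definition eta_set (chi : R -> R) : set R := [set chi x | x in `[1, expR 1]].

Definition chi2 (chi : R -> R) : Prop := has_inf (eta_set chi).

Definition eta_chi (chi : R -> R) : R := inf (eta_set chi).

Definition omega_bar (x : R) : R := (1 + ln x ^+ 2)^-1.

Definition wnorm (g : R -> R) : \bar R :=
  ereal_sup [set (omega_bar x * `|g x|)%:E | x in Rpos].

Definition log_unif_cont (g : R -> R) : Prop :=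
  forall eps : R, 0 < eps -> exists2 delta : R, 0 < delta &
    forall x y, 0 < x -> 0 < y -> `|ln x - ln y| <= delta -> `|g x - g y| < eps.

Definition log_cont_at (f : R -> R) (x : R) : Prop :=
  forall eps : R, 0 < eps -> exists2 delta : R, 0 < delta &
    forall y, 0 < y -> `|ln y - ln x| <= delta -> `|f y - f x| < eps.

Definition UB_omega_plus (f : R -> R) : Prop :=
  (forall x, 0 < x -> 0 <= f x) /\
  (exists M : R, forall x, 0 < x -> `|omega_bar x * f x| <= M) /\
  log_unif_cont (fun x => omega_bar x * f x).

Definition MG (chi : R -> R) (w : R) (f : R -> R) (x : R) : R :=
  sup (range (fun k : int => chi (expR (- k%:~R) * x `^ w) * f (expR (k%:~R / w))))
  / sup (range (fun k : int => chi (expR (- k%:~R) * x `^ w))).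

End Defs.

From HB Require Import structures.
From mathcomp Require Import all_boot all_order all_algebra.
From mathcomp Require Import all_classical all_reals all_analysis.
From mathcomp Require Import ring lra.
(* The denominator is
   at least [eta], since every orbit [e^-k x^w] meets [1, e]; and the numerator
   differs from [f x] times the denominator by at most
   [sup_k |chi (e^-k x^w)| |f (e^(k/w)) - f x|]. Samples with [|k/w - ln x| <= d]
   contribute through the modulus of continuity of [f]; for the others the second
   moment gives [|chi (e^-k x^w)| <= m_2 / (w d)^2], which vanishes as [w -> oo].
   In the weighted case the growth factor [1 + ln^2] of [f = (omega_bar f) / omega_bar]
   is quadratic in [k/w - ln x] and is absorbed by the same moment bound. *)

Set Implicit Arguments.
Unset Strict Implicit.
Unset Printing Implicit Defensive.

Import Order.TTheory GRing.Theory Num.Theory.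
Import numFieldNormedType.Exports.
Local Open Scope classical_set_scope.
Local Open Scope ring_scope.

Section SupProduct.
Variables (R : realType) (a b : int -> R) (A c E : R).
Hypotheses (a_bound : forall k, `|a k| <= A) (c_ge0 : 0 <= c)
  (ab_close : forall k, `|a k| * `|b k - c| <= E).

Let ab_le k : a k * b k <= a k * c + E /\ a k * c <= a k * b k + E.
Proof.
have := ab_close k; rewrite -normrM mulrBr => h; split.
  by have := ler_norm (a k * b k - a k * c); lra.
by have := ler_norm (- (a k * b k - a k * c)); rewrite normrN; lra.
Qed.

Let has_sup_a : has_sup (range a).
Proof.
split; first by exists (a 0); exists 0.
by exists A => _ [k _ <-]; apply: le_trans (a_bound k); apply: ler_norm.
Qed.

Let le_sup_a k : a k <= sup (range a).
Proof. by apply: sup_upper_bound => //; exists k. Qed.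

Lemma sup_mul_dist : 0 < sup (range a) ->
  `|sup (range (fun k => a k * b k)) - sup (range a) * c| <= E.
Proof.
set D := sup (range a); set S := sup _ => D0.
have acD k : a k * c <= D * c by apply: ler_wpM2r; last exact: le_sup_a.
have S_ub : S <= D * c + E.
  apply: ge_sup; first by exists (a 0 * b 0); exists 0.
  by move=> _ [k _ <-]; have [h _] := ab_le k; have := acD k; lra.
have le_S k : a k * b k <= S.
  apply: sup_upper_bound; last by exists k.
  split; first by exists (a 0 * b 0); exists 0.
  by exists (D * c + E) => _ [j _ <-]; have [h _] := ab_le j; have := acD j; lra.
have S_lb : D * c - E <= S.
  have [c0|c_neq0] := eqVneq c 0.
    have [_ h] := ab_le 0; have := le_S 0.
    by rewrite c0 mulr0 in h *; rewrite mulr0; lra.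
  have c_gt0 : 0 < c by rewrite lt_def c_neq0.
  suff : D <= (S + E) / c by rewrite ler_pdivlMr // => h; lra.
  apply: ge_sup; first by exists (a 0); exists 0.
  by move=> _ [k _ <-]; rewrite ler_pdivlMr //; have [_ h] := ab_le k; have := le_S k; lra.
by rewrite ler_norml; apply/andP; split; lra.
Qed.

Lemma sup_mul_ratio_dist (eta : R) : 0 < eta -> eta <= sup (range a) ->
  `|sup (range (fun k => a k * b k)) / sup (range a) - c| <= E / eta.
Proof.
move=> eta0 eta_le; have D0 := lt_le_trans eta0 eta_le.
have E0 : 0 <= E by apply: le_trans (ab_close 0); rewrite mulr_ge0.
have -> : sup (range (fun k => a k * b k)) / sup (range a) - c =
          (sup (range (fun k => a k * b k)) - sup (range a) * c) / sup (range a).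
  by field; rewrite gt_eqF.
rewrite normrM normfV (gtr0_norm D0).
apply: (@le_trans _ _ (E / sup (range a))).
  by rewrite ler_pM2r ?invr_gt0 //; apply: sup_mul_dist.
by rewrite ler_wpM2l // lef_pV2 ?posrE.
Qed.

End SupProduct.

(* [G1], [G2] stand for [omega_bar * f] at [e^s] and at [e^y]. *)
Section WeightedDifference.
Variables (R : realFieldType) (G1 G2 s y Mg : R).
Hypothesis G1_bound : `|G1| <= Mg.

Lemma weighted_diff_near (d ep : R) : `|G1 - G2| <= ep -> `|s - y| <= d -> d <= 1 ->
  `|G1 * (1 + s ^+ 2) - G2 * (1 + y ^+ 2)| <= (Mg * (2 * d) + ep) * (1 + y ^+ 2).
Proof.
move=> G12 sy d1; have Mg0 : 0 <= Mg := le_trans (normr_ge0 _) G1_bound.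
have d0 : 0 <= d := le_trans (normr_ge0 _) sy.
have y0 : 0 < 1 + y ^+ 2 by rewrite ltr_pwDl // sqr_ge0.
have -> : G1 * (1 + s ^+ 2) - G2 * (1 + y ^+ 2) =
  G1 * ((s - y) * (s + y)) + (G1 - G2) * (1 + y ^+ 2) by ring.
apply: le_trans (ler_normD _ _) _; rewrite !normrM (ger0_norm (ltW y0)).
have sy_sum : `|s + y| <= 2 * (1 + y ^+ 2).
  have -> : s + y = (s - y) + 2 * y by ring.
  apply: le_trans (ler_normD _ _) _; rewrite normrM ger0_norm //.
  have := sqr_ge0 (`|y| - 1); have := normr_ge0 y; rewrite -(real_normK (num_real y)).
  nra.
have := ler_pM (normr_ge0 _) (normr_ge0 _) sy sy_sum => h1.
have := ler_pM (normr_ge0 _) (mulr_ge0 (normr_ge0 _) (normr_ge0 _)) G1_bound h1 => h2.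
have h3 : `|G1 - G2| * (1 + y ^+ 2) <= ep * (1 + y ^+ 2) by rewrite ler_pM2r.
have -> : (Mg * (2 * d) + ep) * (1 + y ^+ 2) =
  Mg * (d * (2 * (1 + y ^+ 2))) + ep * (1 + y ^+ 2) by ring.
lra.
Qed.

Lemma weighted_diff_far : `|G2| <= Mg ->
  `|G1 * (1 + s ^+ 2) - G2 * (1 + y ^+ 2)| <= Mg * (3 + 2 * (s - y) ^+ 2) * (1 + y ^+ 2).
Proof.
move=> G2_bound; have y0 : 0 < 1 + y ^+ 2 by rewrite ltr_pwDl // sqr_ge0.
have s0 : 0 <= 1 + s ^+ 2 by rewrite addr_ge0 // sqr_ge0.
apply: le_trans (ler_normB _ _) _; rewrite !normrM (ger0_norm (ltW y0)) (ger0_norm s0).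
have s_y : 1 + s ^+ 2 <= (2 + 2 * (s - y) ^+ 2) * (1 + y ^+ 2).
  have := sqr_ge0 (s - 2 * y); have := sqr_ge0 y; have := sqr_ge0 (s - y); nra.
have := ler_pM (normr_ge0 _) s0 G1_bound s_y => h1.
have h2 : `|G2| * (1 + y ^+ 2) <= Mg * (1 + y ^+ 2) by rewrite ler_pM2r.
have -> : Mg * (3 + 2 * (s - y) ^+ 2) * (1 + y ^+ 2) =
  Mg * ((2 + 2 * (s - y) ^+ 2) * (1 + y ^+ 2)) + Mg * (1 + y ^+ 2) by ring.
lra.
Qed.

End WeightedDifference.

Lemma mul_div_add1_le {R : realFieldType} (M c : R) : 0 <= M -> 0 <= c ->
  M * (c / (M + 1)) <= c.
Proof.
move=> M0 c0; rewrite mulrCA ler_piMr // ler_pdivrMr ?ltr_wpDl //; lra.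
Qed.

Lemma eventually_div_sqr_le {R : realType} (C e : R) : 0 < e ->
  \forall w \near +oo, C / w ^+ 2 <= e.
Proof.
move=> e0; near=> w.
have w1 : 1 < w by near: w; apply: nbhs_pinfty_gt; rewrite num_real.
have Cw : C / e < w by near: w; apply: nbhs_pinfty_gt; rewrite num_real.
rewrite ler_pdivrMr ?exprn_gt0 ?(lt_trans ltr01) //.
have ww : w <= w * w by nra.
by rewrite ltr_pdivrMr // in Cw; have := ler_wpM2l (ltW e0) ww; rewrite expr2; lra.
Unshelve. all: by end_near.
Qed.

Lemma omega_bar_gt0 {R : realType} (x : R) : 0 < omega_bar x.
Proof. by rewrite /omega_bar invr_gt0 ltr_pwDl // sqr_ge0. Qed.

Lemma omega_bar_mulK {R : realType} (x c : R) : omega_bar x * c * (1 + ln x ^+ 2) = c.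
Proof.
by rewrite /omega_bar mulrAC mulVf ?mul1r // gt_eqF // ltr_pwDl // sqr_ge0.
Qed.

Lemma wnorm_cvg0 (R : realType) (F : set_system R) {FF : Filter F} (g : R -> R -> R) :
  (forall e, 0 < e -> \forall w \near F, forall x, 0 < x -> omega_bar x * `|g w x| <= e) ->
  wnorm (g w) @[w --> F] --> 0%E.
Proof.
move=> g_small.
have wnorm_ge0 w : (0 <= wnorm (g w))%E.
  apply: (@le_trans _ _ (omega_bar 1 * `|g w 1|)%:E).
    by rewrite lee_fin mulr_ge0 // ltW // omega_bar_gt0.
  by apply: ereal_sup_ubound; exists 1 => //; rewrite /Rpos /= ltr01.
have wnorm_le e : 0 < e -> \forall w \near F, (wnorm (g w) <= e%:E)%E.
  move=> e0; apply: filterS (g_small e e0) => w gw.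
  by apply: ge_ereal_sup => _ [x x0 <-]; rewrite lee_fin; apply: gw.
apply/fine_cvgP; split.
  apply: filterS (wnorm_le 1 ltr01) => w w1.
  by rewrite ge0_fin_numE ?wnorm_ge0 //; apply: le_lt_trans w1 (ltry _).
apply/cvgrPdist_le => e e0; apply: filterS (wnorm_le e e0) => w /=.
move: (wnorm_ge0 w); case: (wnorm _) => [r| |] //= r0 r_le.
by rewrite sub0r normrN ger0_norm -?lee_fin.
Qed.

Section Kernel.
Variables (R : realType) (chi : R -> R).

Lemma chi1_moment_bound : chi1 chi -> exists2 m2 : R, 0 <= m2 &
  forall u, 0 < u -> forall k : int,
    `|chi (expR (- k%:~R) * u)| * (k%:~R - ln u) ^+ 2 <= m2.
Proof.
move=> chi_1.
have ub u k : 0 < u ->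
    ((`|chi (expR (- k%:~R) * u)| * `|k%:~R - ln u| `^ 2)%:E <= moment 2 chi)%E.
  by move=> u0; apply: ereal_sup_ubound; exists u => //; exists k.
have m_ge0 : (0 <= moment 2 chi)%E.
  by apply: le_trans (ub 1 0 ltr01); rewrite lee_fin mulr_ge0 // powR_ge0.
have m_fin : moment 2 chi \is a fin_num by rewrite ge0_fin_numE.
exists (fine (moment 2 chi)); first by rewrite fine_ge0.
move=> u u0 k; have := ub u k u0; rewrite -(fineK m_fin) lee_fin.
by rewrite -[2]/(2%:R) powR_mulrn // real_normK // num_real.
Qed.

Variable M : R.
Hypothesis chi_bound : forall x, 0 < x -> `|chi x| <= M.

Hypothesis chi_2 : chi2 chi.

(* Every orbit [e^-k u] meets [1, e], where [chi >= eta]. *)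
Lemma eta_chi_le_sup_orbit u : 0 < u ->
  eta_chi chi <= sup (range (fun k : int => chi (expR (- k%:~R) * u))).
Proof.
move=> u0; have /andP[k_le k_gt] := floor_itv (ln u).
set k := Num.floor (ln u) in k_le k_gt; rewrite intrD in k_gt.
have orbit_k : expR (- k%:~R) * u = expR (ln u - k%:~R).
  by rewrite expRD lnK ?posrE // mulrC.
apply: (@le_trans _ _ (chi (expR (- k%:~R) * u))).
  apply: ge_inf; first by case: chi_2.
  exists (expR (- k%:~R) * u) => //; rewrite orbit_k /= in_itv /=.
  rewrite -[X in X <= _ <= _]expR0 !ler_expR subr_ge0 k_le /=.
  by rewrite lerBlDl; move: k_gt; rewrite addrC; exact: ltW.
apply: sup_upper_bound; last by exists k.
split; first by exists (chi (expR (- 0%:~R) * u)); exists 0.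
exists M => _ [j _ <-]; apply: le_trans (chi_bound _); first exact: ler_norm.
by rewrite mulr_gt0 ?expR_gt0.
Qed.

Hypothesis eta_gt0 : 0 < eta_chi chi.

Lemma MG_dist_le (f : R -> R) (x w E : R) : 0 < x -> 0 <= f x ->
  (forall k : int,
    `|chi (expR (- k%:~R) * x `^ w)| * `|f (expR (k%:~R / w)) - f x| <= E) ->
  `|MG chi w f x - f x| <= E / eta_chi chi.
Proof.
move=> x0 fx0 close; apply: (@sup_mul_ratio_dist _ _ _ M) => //.
  by move=> k; apply: chi_bound; rewrite mulr_gt0 ?expR_gt0 ?powR_gt0.
by apply: eta_chi_le_sup_orbit; rewrite powR_gt0.
Qed.

Variable m2 : R.
Hypotheses (m2_ge0 : 0 <= m2) (chi_moment : forall u, 0 < u -> forall k : int,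
  `|chi (expR (- k%:~R) * u)| * (k%:~R - ln u) ^+ 2 <= m2).

Lemma kernel_sample_moment_le (x w : R) (k : int) : 0 < x -> 0 < w ->
  `|chi (expR (- k%:~R) * x `^ w)| * (k%:~R / w - ln x) ^+ 2 <= m2 / w ^+ 2.
Proof.
move=> x0 w0; rewrite ler_pdivlMr ?exprn_gt0 // -mulrA.
have -> : (k%:~R / w - ln x) ^+ 2 * w ^+ 2 = (k%:~R - ln (x `^ w)) ^+ 2.
  by rewrite ln_powR -exprMn; congr (_ ^+ 2); field; rewrite gt_eqF.
exact/chi_moment/powR_gt0.
Qed.

Lemma kernel_sample_far_le (x w d : R) (k : int) : 0 < x -> 0 < w -> 0 < d ->
  d <= `|k%:~R / w - ln x| -> `|chi (expR (- k%:~R) * x `^ w)| <= m2 / w ^+ 2 / d ^+ 2.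
Proof.
move=> x0 w0 d0 far; rewrite ler_pdivlMr ?exprn_gt0 //.
apply: le_trans (kernel_sample_moment_le k x0 w0); rewrite ler_wpM2l //.
rewrite -[X in _ <= X]real_normK ?num_real // !expr2.
by apply: ler_pM => //; exact: ltW.
Qed.

Lemma kernel_sample_far_quadratic_le (x w d : R) (k : int) :
  0 < x -> 0 < w -> 0 < d -> d <= `|k%:~R / w - ln x| ->
  `|chi (expR (- k%:~R) * x `^ w)| * (3 + 2 * (k%:~R / w - ln x) ^+ 2) <=
    m2 * (3 / d ^+ 2 + 2) / w ^+ 2.
Proof.
move=> x0 w0 d0 far; have h1 := kernel_sample_far_le x0 w0 d0 far.
have h2 := kernel_sample_moment_le k x0 w0.
have -> : m2 * (3 / d ^+ 2 + 2) / w ^+ 2 = 3 * (m2 / w ^+ 2 / d ^+ 2) + 2 * (m2 / w ^+ 2).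
  by field; rewrite !gt_eqF ?exprn_gt0.
rewrite mulrDr mulrCA; lra.
Qed.

Lemma MG_dist_le_log_modulus (f : R -> R) (Mf ep d x w : R) :
  0 < x -> 0 < w -> 0 < d -> 0 <= f x -> (forall t, 0 < t -> `|f t| <= Mf) ->
  (forall t, 0 < t -> `|ln t - ln x| <= d -> `|f t - f x| <= ep) ->
  `|MG chi w f x - f x| <= (M * ep + 2 * Mf * m2 / d ^+ 2 / w ^+ 2) / eta_chi chi.
Proof.
move=> x0 w0 d0 fx0 f_bound f_mod.
have ep0 : 0 <= ep by apply: le_trans (normr_ge0 _) (f_mod x x0 _); rewrite subrr normr0 ltW.
have Mf0 : 0 <= Mf := le_trans (normr_ge0 _) (f_bound x x0).
have M0 : 0 <= M := le_trans (normr_ge0 _) (chi_bound ltr01).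
have far_ge0 : 0 <= 2 * Mf * m2 / d ^+ 2 / w ^+ 2.
  by rewrite !divr_ge0 ?exprn_ge0 ?mulr_ge0 // ltW.
apply: MG_dist_le => // k; set t := expR (k%:~R / w).
have chi_ge0 := normr_ge0 (chi (expR (- k%:~R) * x `^ w)).
have [near|far] := leP `|k%:~R / w - ln x| d.
  have chi_le : `|chi (expR (- k%:~R) * x `^ w)| <= M.
    by apply: chi_bound; rewrite mulr_gt0 ?expR_gt0 ?powR_gt0.
  have : `|f t - f x| <= ep by apply: f_mod; rewrite ?expR_gt0 // expRK.
  by move/(ler_pM chi_ge0 (normr_ge0 _) chi_le); lra.
have df : `|f t - f x| <= 2 * Mf.
  by apply: le_trans (ler_normB _ _) _; have := f_bound t (expR_gt0 _); have := f_bound x x0; lra.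
have := ler_pM chi_ge0 (normr_ge0 _) (kernel_sample_far_le x0 w0 d0 (ltW far)) df.
have -> : m2 / w ^+ 2 / d ^+ 2 * (2 * Mf) = 2 * Mf * m2 / d ^+ 2 / w ^+ 2.
  by rewrite mulrC !mulrA mulrAC.
have := ler_wpM2l M0 ep0; rewrite mulr0; lra.
Qed.

Lemma MG_cvg_log_cont (f : R -> R) (Mf x : R) : 0 < x -> 0 <= f x ->
  (forall t, 0 < t -> `|f t| <= Mf) -> log_cont_at f x ->
  MG chi w f x @[w --> +oo] --> f x.
Proof.
move=> x0 fx0 f_bound f_cont; apply/cvgrPdist_le => e e0.
have M0 : 0 <= M := le_trans (normr_ge0 _) (chi_bound ltr01).
have e_eta : 0 < e * eta_chi chi / 2 by rewrite !mulr_gt0.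
set ep := e * eta_chi chi / 2 / (M + 1).
have [d d0 f_mod] := f_cont ep (divr_gt0 e_eta (ltr_wpDl M0 ltr01)).
have M_ep : M * ep <= e * eta_chi chi / 2 by apply/mul_div_add1_le/ltW.
near=> w.
have w0 : 0 < w by near: w; apply: nbhs_pinfty_gt; rewrite num_real.
have far_small : 2 * Mf * m2 / d ^+ 2 / w ^+ 2 <= e * eta_chi chi / 2.
  by near: w; apply: eventually_div_sqr_le.
rewrite distrC; apply: le_trans (@MG_dist_le_log_modulus f Mf ep d x w x0 w0 d0 fx0 f_bound _) _.
  by move=> t t0 /(f_mod t t0)/ltW.
by rewrite ler_pdivrMr //; lra.
Unshelve. all: by end_near.
Qed.

Lemma omega_bar_MG_dist_le (f : R -> R) (Mg d ep x w : R) :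
  0 < x -> 0 < w -> 0 < d -> d <= 1 -> 0 <= f x ->
  (forall t, 0 < t -> `|omega_bar t * f t| <= Mg) ->
  (forall t, 0 < t -> `|ln t - ln x| <= d ->
     `|omega_bar t * f t - omega_bar x * f x| <= ep) ->
  omega_bar x * `|MG chi w f x - f x| <=
    (M * (Mg * (2 * d) + ep) + Mg * (m2 * (3 / d ^+ 2 + 2) / w ^+ 2)) / eta_chi chi.
Proof.
move=> x0 w0 d0 d1 fx0 g_bound g_mod.
have ep0 : 0 <= ep by apply: le_trans (normr_ge0 _) (g_mod x x0 _); rewrite subrr normr0 ltW.
have Mg0 : 0 <= Mg := le_trans (normr_ge0 _) (g_bound x x0).
have M0 : 0 <= M := le_trans (normr_ge0 _) (chi_bound ltr01).
have near_ge0 : 0 <= M * (Mg * (2 * d) + ep).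
  by rewrite mulr_ge0 // addr_ge0 // mulr_ge0 // mulr_ge0 // ltW.
have far_ge0 : 0 <= Mg * (m2 * (3 / d ^+ 2 + 2) / w ^+ 2).
  by rewrite mulr_ge0 // divr_ge0 ?sqr_ge0 // mulr_ge0 // addr_ge0 // divr_ge0 // sqr_ge0.
set E := M * (Mg * (2 * d) + ep) + _.
(* Unweight: [f = (omega_bar * f) * (1 + ln^2)], then bound the sampled differences
   of [omega_bar * f] near and far from [ln x]. *)
suff : `|MG chi w f x - f x| <= E * (1 + ln x ^+ 2) / eta_chi chi.
  by move=> /(ler_wpM2l (ltW (omega_bar_gt0 x))); rewrite !mulrA omega_bar_mulK.
apply: MG_dist_le => // k; set s := k%:~R / w; set t := expR s.
have t0 : 0 < t := expR_gt0 s.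
have ln_t : ln t = s := expRK s.
have -> : f t - f x = omega_bar t * f t * (1 + s ^+ 2) - omega_bar x * f x * (1 + ln x ^+ 2).
  by rewrite -{1}ln_t !omega_bar_mulK.
have chi_ge0 := normr_ge0 (chi (expR (- k%:~R) * x `^ w)).
have [near|far] := leP `|s - ln x| d.
  have chi_le : `|chi (expR (- k%:~R) * x `^ w)| <= M.
    by apply: chi_bound; rewrite mulr_gt0 ?expR_gt0 ?powR_gt0.
  have g_near : `|omega_bar t * f t - omega_bar x * f x| <= ep.
    by apply: g_mod; rewrite // ln_t.
  have := @weighted_diff_near _ _ _ s (ln x) _ (g_bound t t0) _ _ g_near near d1.
  move=> /(ler_pM chi_ge0 (normr_ge0 _) chi_le).
  move/le_trans; apply; rewrite [M * _]mulrA ler_wpM2r ?addr_ge0 ?sqr_ge0 //.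
  by rewrite /E lerDl.
have := @weighted_diff_far _ _ _ s (ln x) _ (g_bound t t0) (g_bound x x0).
move/(ler_wpM2l chi_ge0).
have := kernel_sample_far_quadratic_le x0 w0 d0 (ltW far); rewrite -/s => aQ.
move/le_trans; apply; rewrite mulrA ler_wpM2r ?addr_ge0 ?sqr_ge0 // mulrCA.
exact: le_trans (ler_wpM2l Mg0 aQ) (ler_wpDl near_ge0 (lexx _)).
Qed.

Lemma wnorm_MG_cvg0 (f : R -> R) : UB_omega_plus f ->
  wnorm (fun x => MG chi w f x - f x) @[w --> +oo] --> 0%E.
Proof.
move=> [f_ge0 [[Mg g_bound] g_cont]]; apply: wnorm_cvg0 => e e0.
have Mg0 : 0 <= Mg := le_trans (normr_ge0 _) (g_bound _ ltr01).
have M0 : 0 <= M := le_trans (normr_ge0 _) (chi_bound ltr01).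
have e_eta : 0 < e * eta_chi chi / 2 by rewrite !mulr_gt0.
set ep := e * eta_chi chi / 2 / (M + 1) / (2 * Mg + 1).
have Mg1 : 0 < 2 * Mg + 1 by rewrite ltr_wpDl // mulr_ge0.
have ep0 : 0 < ep by rewrite divr_gt0 // divr_gt0 // (ltr_wpDl M0 ltr01).
have [d0 d0_gt0 g_mod] := g_cont ep ep0.
set d := Num.min d0 (Num.min ep 1).
have d_gt0 : 0 < d by rewrite !lt_min d0_gt0 ep0 ltr01.
have [d_d0 d_ep d1] : [/\ d <= d0, d <= ep & d <= 1].
  by rewrite !ge_min !lexx !orbT.
have near_small : M * (Mg * (2 * d) + ep) <= e * eta_chi chi / 2.
  apply: (le_trans _ (mul_div_add1_le M0 (ltW e_eta))); apply: ler_wpM2l => //.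
  have -> : e * eta_chi chi / 2 / (M + 1) = (2 * Mg + 1) * ep.
    by rewrite /ep [RHS]mulrC divfK // gt_eqF.
  have := ler_wpM2l Mg0 d_ep; lra.
near=> w => x x0.
have w0 : 0 < w by near: w; apply: nbhs_pinfty_gt; rewrite num_real.
have far_small : Mg * (m2 * (3 / d ^+ 2 + 2)) / w ^+ 2 <= e * eta_chi chi / 2.
  by near: w; apply: eventually_div_sqr_le.
rewrite -mulrA in far_small.
apply: le_trans (@omega_bar_MG_dist_le f Mg d ep x w x0 w0 d_gt0 d1 (f_ge0 x x0) g_bound _) _.
  by move=> t t0 td; apply/ltW/g_mod => //; apply: le_trans td d_d0.
by rewrite ler_pdivrMr //; lra.
Unshelve. all: by end_near.
Qed.

End Kernel.

Theorem theorem3p3 (R : realType) (chi : R -> R) :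
  is_kernel chi -> chi1 chi -> chi2 chi -> 0 < eta_chi chi ->
  (forall f : R -> R,
     (forall x, 0 < x -> 0 <= f x) ->
     (exists M : R, forall x, 0 < x -> `|f x| <= M) ->
     forall x, 0 < x -> log_cont_at f x ->
       MG chi w f x @[w --> +oo] --> f x) /\
  (forall f : R -> R, UB_omega_plus f ->
     wnorm (fun x => MG chi w f x - f x) @[w --> +oo] --> 0%E).
Proof.
move=> [_ [M chi_bound]] chi_1 chi_2 eta_gt0.
have [m2 m2_ge0 chi_moment] := chi1_moment_bound chi_1.
split=> [f f_ge0 [Mf f_bound] x x0|f].
  exact: (MG_cvg_log_cont chi_bound chi_2 eta_gt0 m2_ge0 chi_moment x0 (f_ge0 x x0) f_bound).
exact: (wnorm_MG_cvg0 chi_bound chi_2 eta_gt0 m2_ge0 chi_moment).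
Qed.
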